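(* Suppose both constraints are violated at the unconstrained Nash equilibrium, i.e., $B_{i,S}^{\text{NE}}<B_{i,S}^0$ for $i=1,2$. Then the Nash equilibrium with the regulatory constraints is of one of the following types: Type I. Both SPs increase their small-cell bandwidth allocations to exactly the required amount, i.e., $B_{1,S}=B_{1,S}^0$, $B_{2,S}=B_{2,S}^0$. Type II. One SP increases its small-cell bandwidth exactly to the required amount, while the other SP increases it further beyond the required amount, i.e., $B_{1,S}=B_{1,S}^0, B_{2,S}>B_{2,S}^0$ or $B_{1,S}>B_{1,S}^0, B_{2,S}=B_{2,S}^0$.
   Context: Two competing service providers (SPs), $i=1,2$, each have total licensed bandwidth $B_i$, split into macro-cell bandwidth $B_{i,M}$ and small-cell bandwidth $B_{i,S}$ with $B_{i,M}+B_{i,S}\le B_i$, $B_{i,M}\ge 0$, and regulatory constraint $B_{i,S}\ge B_{i,S}^0$. Macro-cells of SP $i$ provide rate $B_{i,M}R_0$, small-cells provide rate $\lambda_S B_{i,S}R_0$ with $\lambda_S>1$. Mobile users (density $N_m$) can only use macro-cells (with priority); fixed users (density $N_f$) can use macro- or small-cells of either SP. All users have utility $u(r)=r^{1-\alpha}/(1-\alpha)$, $\alpha\in(0,1)$, with demand $D(p)=(1/p)^{1/\alpha}$ at price $p$ per unit rate; users choose the lowest-priced service and fill its capacity. Each SP maximizes its revenue $p_{i,M}K_{i,M}D(p_{i,M})+p_{i,S}K_{i,S}D(p_{i,S})$ in a two-stage game: bandwidth splits first, then prices; the price equilibrium for any fixed bandwidth allocation is the market-clearing price. Without the regulatory constraints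 there is a unique Nash equilibrium with $B_{i,S}^{\text{NE}}=\frac{N_f\lambda_S^{1/\alpha-1}B_i}{N_f\lambda_S^{1/\alpha-1}+N_m}$, $B_{i,M}^{\text{NE}}=\frac{N_mB_i}{N_f\lambda_S^{1/\alpha-1}+N_m}$; with the constraints a Nash equilibrium exists and is unique. *)

From mathcomp Require Import all_boot all_order all_algebra.
From mathcomp Require Import all_classical all_reals all_analysis.
Import Order.TTheory GRing.Theory Num.Theory.
Local Open Scope ring_scope.

Set Implicit Arguments.
Unset Strict Implicit.
Unset Printing Implicit Defensive.

Section Model.
Variable R : realType.
(* Model parameters: density of mobile users Nm, of fixed users Nf,
   spectral efficiency R0, small-cell gain lamS (> 1), utility exponent alpha
   in (0,1). *)
Variables (Nm Nf R0 lamS alpha : R).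

Definition demand (p : R) : R := (p^-1) `^ (alpha^-1).

(* Second stage: market-clearing prices for given total macro bandwidth BM
   and total small-cell bandwidth BS (both SPs' cells of the same kind are
   perfect substitutes, so they clear at a common price).
   Mobile users only use macro cells, fixed users pick the cheapest service.
   - If Nm/BM >= Nf/(lamS*BS) (written multiplied out), the fixed users all
     use small cells: Nm D(pM) = BM R0 and Nf D(pS) = lamS BS R0,
     so pM = (Nm/(R0 BM))^alpha >= pS = (Nf/(R0 lamS BS))^alpha.
   - Otherwise both services clear at a common price p with
     (Nm+Nf) D(p) = (BM + lamS BS) R0. *)
Definition separate_market (BM BS : R) : bool := Nf * BM <= Nm * (lamS * BS).

Definition common_price (BM BS : R) : R :=
  ((Nm + Nf) / (R0 * (BM + lamS * BS))) `^ alpha.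

Definition macro_price (BM BS : R) : R :=
  if separate_market BM BS then (Nm / (R0 * BM)) `^ alpha
  else common_price BM BS.

Definition small_price (BM BS : R) : R :=
  if separate_market BM BS then (Nf / (R0 * (lamS * BS))) `^ alpha
  else common_price BM BS.

(* Revenue of an SP owning (BiM, BiS) when its competitor owns (BjM, BjS):
   p_{i,M} K_{i,M} D(p_{i,M}) + p_{i,S} K_{i,S} D(p_{i,S}); at the
   market-clearing prices the served traffic K D(p) equals the capacity,
   i.e. BiM R0 on macro cells and lamS BiS R0 on small cells. *)
Definition revenue (BiM BiS BjM BjS : R) : R :=
  let BM := BiM + BjM in
  let BS := BiS + BjS in
  macro_price BM BS * (BiM * R0) + small_price BM BS * (lamS * BiS * R0).

Definition feasible (Bi B0 BiM BiS : R) : Prop :=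
  0 <= BiM /\ B0 <= BiS /\ BiM + BiS <= Bi.

Definition constrained_NE (B1 B2 B01 B02 B1M B1S B2M B2S : R) : Prop :=
  [/\ feasible B1 B01 B1M B1S,
      feasible B2 B02 B2M B2S,
      (forall x y, feasible B1 B01 x y ->
          revenue x y B2M B2S <= revenue B1M B1S B2M B2S) &
      (forall x y, feasible B2 B02 x y ->
          revenue x y B1M B1S <= revenue B2M B2S B1M B1S)].

Definition BS_NE (Bi : R) : R :=
  Nf * lamS `^ (alpha^-1 - 1) * Bi / (Nf * lamS `^ (alpha^-1 - 1) + Nm).

End Model.

From mathcomp Require Import all_boot all_order all_algebra.
From mathcomp Require Import all_classical all_reals all_analysis.
From mathcomp Require Import ring lra.
Import Order.TTheory GRing.Theory Num.Theory.
Import numFieldNormedType.Exports.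
Local Open Scope ring_scope.
Local Open Scope classical_set_scope.
Set Implicit Arguments.
Unset Strict Implicit.
Unset Printing Implicit Defensive.

(* Suppose both SPs keep strictly more small-cell bandwidth than required.
   Each SP can then shift a little bandwidth from small to macro cells, and
   from macro to small cells if it owns macro bandwidth, so the one-sided
   derivatives of its revenue along these shifts give first-order conditions.
   In the common-price regime shifting towards small cells always pays, which
   would leave no macro bandwidth at all, where the macro price is unbounded.
   In the separate regime the two SPs' marginal revenues, scaled by M S / R0,
   add up to (2 - alpha) M S (lamS p_S - p_M).  On its boundary p_S = p_M, so
   this sum is positive, contradicting the conditions; in its interior they force
   lamS p_S = p_M and equal small/macro ratios for both SPs, which is exactly
   the unconstrained equilibrium split, so B1S <= BS_NE B1 < B01. *)

Section RealDerivatives.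
Variable R : realType.
Implicit Types (f : R -> R) (x d : R).

Lemma is_derive_le0_at_right_max f x d :
  is_derive x 1 f d -> (\forall t \near x^'+, f t <= f x) -> d <= 0.
Proof.
move=> [fx <-] fmax.
have qd : (fun h => h^-1 *: ((f \o shift x) (h *: 1) - f x)) @ 0^'+ --> 'D_1 f x.
  apply: cvg_trans fx; apply: cvg_app => A [e e0 Ae].
  by exists e => // h he /lt0r_neq0; exact: Ae.
rewrite -(cvg_lim _ qd) //; apply: limr_le; first exact: cvgP qd.
move: fmax => /nbhs_ballP [e /= e0 fmax].
near=> h.
have h0 : 0 < h by near: h; exact: nbhs_right_gt.
have he : h < e by near: h; exact: nbhs_right_lt.
rewrite pmulr_rle0 ?invr_gt0 // subr_le0 /= [h%:A]mulr1 addrC.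
apply: fmax; last by rewrite ltrDl.
by rewrite /ball /= opprD addrA subrr sub0r normrN gtr0_norm.
Unshelve. all: by end_near. Qed.

Lemma is_derive_ge0_at_left_max f x d :
  is_derive x 1 f d -> (\forall t \near x^'-, f t <= f x) -> 0 <= d.
Proof.
move=> fd fmax; rewrite -oppr_le0 -mulrN1.
apply: (@is_derive_le0_at_right_max (f \o -%R) (- x)).
  by apply: is_derive1_comp; rewrite opprK.
rewrite at_rightN /= opprK; move: fmax; apply: filterS => t.
by rewrite /= opprK.
Qed.

Lemma is_derive_affine (c0 c1 : R) :
  is_derive (0 : R) 1 (fun t : R => c0 + c1 * t) c1.
Proof.
have -> : (fun t : R => c0 + c1 * t) = cst c0 + c1 \*: id by apply/funext.
by apply: is_derive_eq; rewrite add0r /GRing.scale /= mulr1.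
Qed.

Lemma is_derive_powR_div_affine (a b T k p : R) : 0 < a -> 0 < b -> 0 < T ->
  is_derive (0 : R) 1 (fun t => (a / (b * (T + k * t))) `^ p)
    (- p * (a / (b * T)) `^ p * k / T).
Proof.
move=> a0 b0 T0.
have aT0 : 0 < a / (b * T) by rewrite divr_gt0 ?mulr_gt0.
have den := is_deriveV (lt0r_neq0 _) (is_derive_affine (b * T) (b * k)).
rewrite /= mulr0 addr0 in den.
have ratio := is_deriveZ a (den (mulr_gt0 b0 T0)).
set g := a \*: _ in ratio.
have powR_at : is_derive (g 0) 1 (fun x : R => x `^ p) (p * (a / (b * T)) `^ (p - 1)).
  rewrite /g /= mulr0 addr0 -/(a / (b * T)).
  apply: DeriveDef; first by apply: (@derivable_powR R); rewrite in_itv /= aT0.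
  by rewrite -derive1E (@powR_derive1 R) // in_itv /= aT0.
have -> : (fun t => (a / (b * (T + k * t))) `^ p) = (fun x : R => x `^ p) \o g.
  by apply/funext => t; rewrite /g /= mulrDr mulrA.
apply: is_derive_eq (is_derive1_comp powR_at ratio) _.
rewrite powRB ?(gt_eqF aT0) ?implybT // powRr1 ?ltW // /GRing.scale /=.
by field; rewrite ?gt_eqF ?mulr_gt0.
Qed.

Lemma is_derive_powR_div_affine_mul (a b T k c0 c1 p : R) :
  0 < a -> 0 < b -> 0 < T ->
  is_derive (0 : R) 1 (fun t => (a / (b * (T + k * t))) `^ p * (c0 + c1 * t))
    ((a / (b * T)) `^ p * c1 - c0 * p * (a / (b * T)) `^ p * k / T).
Proof.
move=> a0 b0 T0.
have prod := is_deriveM (is_derive_powR_div_affine k p a0 b0 T0) (is_derive_affine c0 c1).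
rewrite (_ : (fun t => _) =
  (fun t => (a / (b * (T + k * t))) `^ p) * (fun t => c0 + c1 * t)) //.
by apply: is_derive_eq prod _; rewrite /= !mulr0 !addr0 /GRing.scale /=; ring.
Qed.

End RealDerivatives.

Section Market.
Variables (R : realType) (Nm Nf R0 lamS alpha : R).
Hypotheses (hNm : 0 < Nm) (hNf : 0 < Nf) (hR0 : 0 < R0) (hlam : 1 < lamS)
  (ha0 : 0 < alpha) (ha1 : alpha < 1).

Local Notation payoff := (revenue Nm Nf R0 lamS alpha).
Local Notation sep := (separate_market Nm Nf lamS).

Let lam_gt0 : 0 < lamS. Proof. exact: lt_trans ltr01 hlam. Qed.

Let two_minus_alpha_gt0 : 0 < 2 - alpha.
Proof. by rewrite subr_gt0 (lt_trans ha1) // ltr1n. Qed.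

Definition sep_macro_price (M : R) : R := (Nm / (R0 * M)) `^ alpha.
Definition sep_small_price (S : R) : R := (Nf / (R0 * (lamS * S))) `^ alpha.

Lemma sep_macro_price_gt0 M : 0 < M -> 0 < sep_macro_price M.
Proof. by move=> M0; apply: powR_gt0; rewrite divr_gt0 ?mulr_gt0. Qed.

Lemma sep_small_price_gt0 S : 0 < S -> 0 < sep_small_price S.
Proof. by move=> S0; apply: powR_gt0; rewrite divr_gt0 ?mulr_gt0. Qed.

Lemma sep_small_price_le S S' : 0 < S' -> S' <= S ->
  sep_small_price S <= sep_small_price S'.
Proof.
move=> S'0 S'S; have S0 := lt_le_trans S'0 S'S.
have base_ge0 x : 0 < x -> 0 <= Nf / (R0 * (lamS * x)).
  by move=> x0; rewrite ltW // divr_gt0 ?mulr_gt0.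
apply: ge0_ler_powR; first exact: ltW.
- exact: base_ge0.
- exact: base_ge0.
by rewrite ler_pM2l // lef_pV2 ?posrE ?mulr_gt0 // ler_pM2l // ler_pM2l.
Qed.

Lemma sep_macro_price_unbounded c : 0 < c ->
  \forall u \near 0^'+, c < sep_macro_price u.
Proof.
move=> c0; set r := c `^ alpha^-1.
have r0 : 0 < r by rewrite powR_gt0.
near=> u.
have u0 : 0 < u by near: u; exact: nbhs_right_gt.
have ur : u * (R0 * r) < Nm.
  rewrite -ltr_pdivlMr ?mulr_gt0 //; near: u.
  by apply: nbhs_right_lt; rewrite divr_gt0 ?mulr_gt0.
have -> : c = r `^ alpha by rewrite -powRrM mulVf ?gt_eqF // powRr1 ?ltW.
apply: gt0_ltr_powR; rewrite ?nnegrE ?ltW ?divr_gt0 ?mulr_gt0 //.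
by rewrite ltr_pdivlMr ?mulr_gt0 // (_ : r * _ = u * (R0 * r)) //; ring.
Unshelve. all: by end_near. Qed.

Lemma sep_prices_boundary M S : 0 < M -> 0 < S -> Nf * M = Nm * (lamS * S) ->
  sep_macro_price M = sep_small_price S.
Proof.
move=> M0 S0 hbd; rewrite /sep_macro_price /sep_small_price; congr (_ `^ _).
apply/eqP; rewrite eqr_div ?mulf_neq0 ?lt0r_neq0 ?mulr_gt0 //.
by apply/eqP; rewrite mulrCA -hbd; ring.
Qed.

Lemma revenue_sep m s km ks : sep (m + km) (s + ks) ->
  payoff m s km ks = sep_macro_price (m + km) * (m * R0)
                  + sep_small_price (s + ks) * (lamS * s * R0).
Proof. by move=> hsep; rewrite /revenue /macro_price /small_price /= hsep. Qed.

Lemma separate_market_shiftE M S t :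
  sep (M - t) (S + t) = (Nf * M - Nm * (lamS * S) <= t * (Nf + Nm * lamS)).
Proof.
rewrite /separate_market -subr_ge0 -[in RHS]subr_ge0.
by congr (0 <= _); ring.
Qed.

(* Revenue of an SP after moving [t] units of bandwidth from macro to small
   cells: it agrees with the true revenue while the market stays separate and
   is smooth across the boundary of that regime. *)
Definition sep_shift_revenue (M S m s t : R) : R :=
  sep_macro_price (M - t) * ((m - t) * R0)
  + sep_small_price (S + t) * (lamS * (s + t) * R0).

Definition sep_marginal (M S m s : R) : R :=
  lamS * sep_small_price S * (S - alpha * s) * M
  - sep_macro_price M * (M - alpha * m) * S.

Lemma revenue_sep_shift m s km ks M S t : m + km = M -> s + ks = S ->
  sep (M - t) (S + t) ->
  payoff (m - t) (s + t) km ks = sep_shift_revenue M S m s t.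
Proof.
move=> hM hS hsep.
by rewrite revenue_sep (addrAC m) (addrAC s) hM hS.
Qed.

Lemma sep_shift_revenue_derive M S m s : 0 < M -> 0 < S ->
  is_derive (0 : R) 1 (sep_shift_revenue M S m s) (R0 / (M * S) * sep_marginal M S m s).
Proof.
move=> M0 S0.
have macro := is_derive_powR_div_affine_mul (-1) (m * R0) (- R0) alpha hNm hR0 M0.
have small := is_derive_powR_div_affine_mul 1 (lamS * s * R0) (lamS * R0) alpha
  hNf (mulr_gt0 hR0 lam_gt0) S0.
rewrite (_ : sep_shift_revenue M S m s =
  (fun t => (Nm / (R0 * (M + -1 * t))) `^ alpha * (m * R0 + - R0 * t)) +
  (fun t => (Nf / (R0 * lamS * (S + 1 * t))) `^ alpha
            * (lamS * s * R0 + lamS * R0 * t))); last first.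
  apply/funext => t; rewrite /sep_shift_revenue /sep_macro_price /sep_small_price /=.
  congr (_ `^ _ * _ + _ `^ _ * _); first by rewrite mulN1r.
  - by ring.
  - by rewrite mul1r mulrA.
  - by ring.
apply: is_derive_eq (is_deriveD macro small) _.
rewrite /sep_marginal /sep_macro_price /sep_small_price (mulrA R0 lamS S).
by field; rewrite ?gt_eqF.
Qed.

Definition common_shift_revenue (T X t : R) : R :=
  ((Nm + Nf) / (R0 * (T + (lamS - 1) * t))) `^ alpha * ((X + (lamS - 1) * t) * R0).

Lemma revenue_common_shift m s km ks M S t : m + km = M -> s + ks = S ->
  ~~ sep (M - t) (S + t) ->
  payoff (m - t) (s + t) km ks = common_shift_revenue (M + lamS * S) (m + lamS * s) t.
Proof.
move=> hM hS hcom; rewrite -hM -hS (addrAC m) (addrAC s) in hcom.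
rewrite /revenue /macro_price /small_price /= (negbTE hcom) -hM -hS.
rewrite /common_price -mulrDr; congr (_ `^ _ * _); last by ring.
by congr (_ / (R0 * _)); ring.
Qed.

Lemma common_shift_revenue_derive T X : 0 < T ->
  is_derive (0 : R) 1 (common_shift_revenue T X)
    (((Nm + Nf) / (R0 * T)) `^ alpha * (lamS - 1) * R0 * (T - alpha * X) / T).
Proof.
move=> T0.
have := is_derive_powR_div_affine_mul (lamS - 1) (X * R0) ((lamS - 1) * R0) alpha
  (addr_gt0 hNm hNf) hR0 T0.
rewrite (_ : (fun t => _) = common_shift_revenue T X); last first.
  by apply/funext => t; rewrite /common_shift_revenue; congr (_ * _); ring.
by move=> d; apply: is_derive_eq d _; field; rewrite gt_eqF.
Qed.

Lemma sep_marginal_sum m1 s1 m2 s2 :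
  sep_marginal (m1 + m2) (s1 + s2) m1 s1 + sep_marginal (m1 + m2) (s1 + s2) m2 s2
  = (2 - alpha) * (m1 + m2) * (s1 + s2)
    * (lamS * sep_small_price (s1 + s2) - sep_macro_price (m1 + m2)).
Proof. by rewrite /sep_marginal; ring. Qed.

Lemma sep_marginal_all_macro_gt0 M s1 s2 : 0 < M -> 0 < s1 -> 0 < s2 ->
  sep M (s1 + s2) ->
  (Nf * M < Nm * (lamS * (s1 + s2)) -> 0 <= sep_marginal M (s1 + s2) 0 s1) ->
  0 < sep_marginal M (s1 + s2) M s2.
Proof.
move=> M0 s1_0 s2_0 hsep idle.
set S := s1 + s2; have S0 : 0 < S by rewrite addr_gt0.
have A0 := sep_macro_price_gt0 M0.
have B0 : 0 < lamS * sep_small_price S by rewrite mulr_gt0 ?sep_small_price_gt0.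
rewrite /sep_marginal; set A := sep_macro_price M; set B := lamS * _.
suff : (1 - alpha) * A * S < B * (S - alpha * s2).
  move=> ineq; rewrite (_ : _ - _ = M * (B * (S - alpha * s2) - (1 - alpha) * A * S)).
    by rewrite pmulr_rgt0 // subr_gt0.
  by ring.
have s2S : alpha * s2 < alpha * S by rewrite ltr_pM2l // ltrDr.
move: hsep; rewrite /separate_market le_eqVlt => /predU1P[hbd | hstrict].
  have AB : A < B.
    by rewrite /A (sep_prices_boundary M0 S0 hbd) ltr_pMl ?sep_small_price_gt0.
  have : (1 - alpha) * S * A < (1 - alpha) * S * B.
    by rewrite ltr_pM2l ?mulr_gt0 ?subr_gt0.
  have : B * (alpha * s2) < B * (alpha * S) by rewrite ltr_pM2l.
  nra.
have : A * S <= B * (S - alpha * s1).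
  have := idle hstrict; rewrite /sep_marginal -/A -/B mulr0 subr0 subr_ge0.
  by rewrite -/S mulrAC ler_pM2r.
have a1 : 0 < 1 - alpha by rewrite subr_gt0.
move=> /(ler_wpM2l (ltW a1)).
have : 0 < B * (alpha * s1 * (2 - alpha)) by rewrite mulr_gt0 // mulr_gt0 // mulr_gt0.
rewrite /S; nra.
Qed.

Lemma sep_marginals_eq0_balance m1 s1 m2 s2 : 0 < m1 + m2 -> 0 < s1 + s2 ->
  sep_marginal (m1 + m2) (s1 + s2) m1 s1 = 0 ->
  sep_marginal (m1 + m2) (s1 + s2) m2 s2 = 0 ->
  lamS * sep_small_price (s1 + s2) = sep_macro_price (m1 + m2)
  /\ m1 * (s1 + s2) = s1 * (m1 + m2).
Proof.
move=> M0 S0 D1 D2.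
have A0 := sep_macro_price_gt0 M0.
have prices : lamS * sep_small_price (s1 + s2) = sep_macro_price (m1 + m2).
  apply/eqP; rewrite -subr_eq0.
  have /eqP := sep_marginal_sum m1 s1 m2 s2.
  by rewrite D1 D2 addr0 eq_sym !mulf_eq0 (gt_eqF two_minus_alpha_gt0) (gt_eqF M0) (gt_eqF S0).
split=> //; apply/eqP; rewrite -subr_eq0.
move: D1; rewrite /sep_marginal prices => /eqP.
rewrite (_ : _ - _ =
  sep_macro_price (m1 + m2) * alpha * (m1 * (s1 + s2) - s1 * (m1 + m2))).
  by rewrite !mulf_eq0 (gt_eqF A0) (gt_eqF ha0).
by ring.
Qed.

Lemma sep_first_order_balance m1 s1 m2 s2 :
  0 <= m1 -> 0 <= m2 -> 0 < m1 + m2 -> 0 < s1 -> 0 < s2 ->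
  sep (m1 + m2) (s1 + s2) ->
  (0 < m1 -> sep_marginal (m1 + m2) (s1 + s2) m1 s1 <= 0) ->
  (0 < m2 -> sep_marginal (m1 + m2) (s1 + s2) m2 s2 <= 0) ->
  (Nf * (m1 + m2) < Nm * (lamS * (s1 + s2)) ->
     0 <= sep_marginal (m1 + m2) (s1 + s2) m1 s1) ->
  (Nf * (m1 + m2) < Nm * (lamS * (s1 + s2)) ->
     0 <= sep_marginal (m1 + m2) (s1 + s2) m2 s2) ->
  lamS * sep_small_price (s1 + s2) = sep_macro_price (m1 + m2)
  /\ m1 * (s1 + s2) = s1 * (m1 + m2).
Proof.
move=> hm1 hm2 M0 s1_0 s2_0 hsep le1 le2 ge1 ge2.
move: hm1; rewrite le_eqVlt => /predU1P[m1z | m1p].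
  rewrite -m1z add0r in M0 hsep ge1 le2.
  have := sep_marginal_all_macro_gt0 M0 s1_0 s2_0 hsep ge1.
  by rewrite ltNge le2.
move: hm2; rewrite le_eqVlt => /predU1P[m2z | m2p].
  rewrite -m2z addr0 [s1 + s2]addrC in M0 hsep ge2 le1.
  have := sep_marginal_all_macro_gt0 M0 s2_0 s1_0 hsep ge2.
  by rewrite ltNge le1.
have S0 : 0 < s1 + s2 by rewrite addr_gt0.
have D1 := le1 m1p; have D2 := le2 m2p.
move: hsep; rewrite /separate_market le_eqVlt => /predU1P[hbd | hstrict].
  have := sep_marginal_sum m1 s1 m2 s2.
  rewrite (sep_prices_boundary M0 S0 hbd).
  have : 0 < (2 - alpha) * (m1 + m2) * (s1 + s2)
             * (lamS * sep_small_price (s1 + s2) - sep_small_price (s1 + s2)).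
    by rewrite !mulr_gt0 // subr_gt0 ltr_pMl ?sep_small_price_gt0.
  lra.
apply: sep_marginals_eq0_balance => //; apply/le_anti.
- by rewrite D1 ge1.
- by rewrite D2 ge2.
Qed.

Lemma sep_price_balance_ratio M S : 0 < M -> 0 < S ->
  lamS * sep_small_price S = sep_macro_price M ->
  Nm * S = lamS `^ (alpha^-1 - 1) * Nf * M.
Proof.
move=> M0 S0 prices.
have lam_root : lamS `^ alpha^-1 = lamS `^ (alpha^-1 - 1) * lamS.
  by rewrite -{1}(subrK 1 alpha^-1) powRD ?powRr1 ?ltW // lt0r_neq0 ?implybT.
have lam_pow : (lamS `^ alpha^-1) `^ alpha = lamS.
  by rewrite -powRrM mulVf ?gt_eqF // powRr1 // ltW.
have : lamS `^ alpha^-1 * (Nf / (R0 * (lamS * S))) = Nm / (R0 * M).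
  apply: (powR_injective ha0); rewrite /= ?nnegrE.
  - by rewrite mulr_ge0 ?powR_ge0 // divr_ge0 ?ltW ?mulr_gt0.
  - by rewrite divr_ge0 ?ltW ?mulr_gt0.
  by rewrite powRM ?lam_pow ?powR_ge0 ?divr_ge0 ?ltW ?mulr_gt0.
rewrite lam_root => balance.
rewrite (_ : Nm * S = Nm / (R0 * M) * (R0 * M * S)); last by field; rewrite !gt_eqF.
by rewrite -balance; field; rewrite !gt_eqF.
Qed.

Lemma small_share_le_BS_NE Bi M S m s : 0 < S ->
  Nm * S = lamS `^ (alpha^-1 - 1) * Nf * M -> m * S = s * M -> m + s <= Bi ->
  s <= BS_NE Nm Nf lamS alpha Bi.
Proof.
move=> S0 ratio share budget.
set L := lamS `^ (alpha^-1 - 1).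
have L0 : 0 < L by rewrite powR_gt0.
rewrite /BS_NE -/L ler_pdivlMr ?addr_gt0 ?mulr_gt0 // -(ler_pM2r S0).
rewrite (_ : _ * _ * S = Nf * L * S * (m + s) + s * (Nm * S - L * Nf * M)
                         + Nf * L * (s * M - m * S)); last by ring.
by rewrite ratio share !subrr !mulr0 !addr0 mulrAC ler_pM2r // ler_pM2l ?mulr_gt0.
Qed.

Lemma BS_NE_gt0 Bi : 0 < Bi -> 0 < BS_NE Nm Nf lamS alpha Bi.
Proof.
move=> Bi0; have L0 : 0 < lamS `^ (alpha^-1 - 1) by rewrite powR_gt0.
by rewrite /BS_NE divr_gt0 ?addr_gt0 ?mulr_gt0.
Qed.



Definition best_response (Bi B0 km ks m s : R) : Prop :=
  feasible Bi B0 m s /\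
  forall x y, feasible Bi B0 x y -> payoff x y km ks <= payoff m s km ks.

Section BestResponse.
Variables (Bi B0 km ks m s M S : R).
Hypotheses (hbr : best_response Bi B0 km ks m s) (hslack : B0 < s) (hB0 : 0 <= B0)
  (hkm : 0 <= km) (hks : 0 <= ks) (hM : m + km = M) (hS : s + ks = S).

Let hm : 0 <= m. Proof. by case: hbr => -[]. Qed.

Let s_gt0 : 0 < s := le_lt_trans hB0 hslack.

Let S_gt0 : 0 < S. Proof. by rewrite -hS ltr_wpDr. Qed.

Let shift_le t : t <= m -> B0 - s <= t ->
  payoff (m - t) (s + t) km ks <= payoff m s km ks.
Proof.
case: hbr => -[_ [_ budget]] best tm tB0; apply: best.
by split; [|split]; lra.
Qed.

Lemma best_response_sep_marginal_le0 :
  0 < m -> sep M S -> sep_marginal M S m s <= 0.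
Proof.
move=> m0 hsep.
have M0 : 0 < M by rewrite -hM ltr_wpDr.
have sep_shift u : 0 <= u -> sep (M - u) (S + u).
  move=> u0; rewrite separate_market_shiftE (le_trans _ (mulr_ge0 u0 _)) //.
    by rewrite subr_le0.
  by rewrite addr_ge0 ?mulr_ge0 ?ltW.
rewrite -(pmulr_rle0 _ (divr_gt0 hR0 (mulr_gt0 M0 S_gt0))).
apply: (is_derive_le0_at_right_max (sep_shift_revenue_derive m s M0 S_gt0)).
near=> t.
have t0 : 0 < t by near: t; exact: nbhs_right_gt.
have tm : t < m by near: t; exact: nbhs_right_lt.
rewrite -(revenue_sep_shift hM hS (sep_shift _ (ltW t0))).
rewrite -(revenue_sep_shift hM hS (sep_shift _ (lexx 0))) subr0 addr0.
by apply: shift_le; rewrite ltW // (lt_trans _ t0) // subr_lt0.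
Unshelve. all: by end_near. Qed.

(* Moving bandwidth to macro cells may leave the separate regime at its
   boundary, hence the strict inequality. *)
Lemma best_response_sep_marginal_ge0 :
  0 < M -> Nf * M < Nm * (lamS * S) -> 0 <= sep_marginal M S m s.
Proof.
move=> M0 hstrict.
have c0 : 0 < Nf + Nm * lamS by rewrite addr_gt0 ?mulr_gt0.
have gap0 : (Nf * M - Nm * (lamS * S)) / (Nf + Nm * lamS) < 0.
  by rewrite ltr_pdivrMr // mul0r subr_lt0.
rewrite -(pmulr_rge0 _ (divr_gt0 hR0 (mulr_gt0 M0 S_gt0))).
apply: (is_derive_ge0_at_left_max (sep_shift_revenue_derive m s M0 S_gt0)).
near=> t.
have t0 : t < 0 by near: t; exact: nbhs_left_lt.
have tB0 : B0 - s < t by near: t; apply: nbhs_left_gt; rewrite subr_lt0.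
have tgap : (Nf * M - Nm * (lamS * S)) / (Nf + Nm * lamS) < t.
  by near: t; exact: nbhs_left_gt.
have sep_t : sep (M - t) (S + t) by rewrite separate_market_shiftE -ler_pdivrMr // ltW.
have sep_0 : sep (M - 0) (S + 0) by rewrite subr0 addr0 /separate_market ltW.
rewrite -(revenue_sep_shift hM hS sep_t) -(revenue_sep_shift hM hS sep_0) subr0 addr0.
by apply: shift_le; [exact: le_trans (ltW t0) hm | exact: ltW].
Unshelve. all: by end_near. Qed.

Lemma best_response_common_no_macro : Nm * (lamS * S) < Nf * M -> m = 0.
Proof.
move=> hcom; apply/le_anti; rewrite hm andbT leNgt; apply/negP => m0.
have T0 : 0 < M + lamS * S by rewrite ltr_wpDl ?mulr_gt0 // -hM addr_ge0.
have X0 : 0 < m + lamS * s by rewrite addr_gt0 ?mulr_gt0.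
have XT : m + lamS * s <= M + lamS * S.
  by rewrite -hM -hS lerD ?lerDl // ler_pM2l // lerDl.
have c0 : 0 < Nf + Nm * lamS by rewrite addr_gt0 ?mulr_gt0.
have gap0 : 0 < (Nf * M - Nm * (lamS * S)) / (Nf + Nm * lamS).
  by rewrite divr_gt0 // subr_gt0.
have : ((Nm + Nf) / (R0 * (M + lamS * S))) `^ alpha * (lamS - 1) * R0
       * (M + lamS * S - alpha * (m + lamS * s)) / (M + lamS * S) <= 0.
  apply: (is_derive_le0_at_right_max (common_shift_revenue_derive (m + lamS * s) T0)).
  near=> t.
  have t0 : 0 < t by near: t; exact: nbhs_right_gt.
  have tm : t < m by near: t; exact: nbhs_right_lt.
  have tgap : t < (Nf * M - Nm * (lamS * S)) / (Nf + Nm * lamS).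
    by near: t; exact: nbhs_right_lt.
  have com_t : ~~ sep (M - t) (S + t).
    by rewrite separate_market_shiftE -ltNge -ltr_pdivlMr.
  have com_0 : ~~ sep (M - 0) (S + 0) by rewrite subr0 addr0 /separate_market -ltNge.
  rewrite -(revenue_common_shift hM hS com_t) -(revenue_common_shift hM hS com_0).
  rewrite subr0 addr0; apply: shift_le; first exact: ltW.
  by rewrite ltW // (lt_trans _ t0) // subr_lt0.
apply/negP; rewrite -ltNge.
have price0 : 0 < ((Nm + Nf) / (R0 * (M + lamS * S))) `^ alpha.
  by apply: powR_gt0; rewrite divr_gt0 ?mulr_gt0 // addr_gt0.
have margin : 0 < M + lamS * S - alpha * (m + lamS * s).
  by rewrite subr_gt0 (lt_le_trans _ XT) // gtr_pMl.
by rewrite divr_gt0 // !mulr_gt0 // subr_gt0.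
Unshelve. all: by end_near. Qed.

(* With no macro bandwidth in the market, a little of it fetches an unbounded
   price. *)
Lemma best_response_macro_total_gt0 : 0 < M.
Proof.
rewrite ltNge; apply/negP => M_le0.
have m0 : m = 0 by apply/le_anti; rewrite hm andbT (le_trans _ M_le0) // -hM lerDl.
have km0 : km = 0 by apply/le_anti; rewrite hkm andbT (le_trans _ M_le0) // -hM lerDr.
have small0 : 0 < lamS * sep_small_price S by rewrite mulr_gt0 ?sep_small_price_gt0.
have c0 : 0 < Nf + Nm * lamS by rewrite addr_gt0 ?mulr_gt0.
near (0 : R)^'+ => u.
have u0 : 0 < u by near: u; exact: nbhs_right_gt.
have us : u < s - B0 by near: u; apply: nbhs_right_lt; rewrite subr_gt0.
have usep : u * (Nf + Nm * lamS) < Nm * (lamS * S).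
  by rewrite -ltr_pdivlMr //; near: u; apply: nbhs_right_lt; rewrite divr_gt0 ?mulr_gt0.
have big : lamS * sep_small_price S < sep_macro_price u.
  by near: u; exact: sep_macro_price_unbounded.
have feas : feasible Bi B0 u (s - u).
  case: hbr => -[_ [_ budget]] _; move: budget us u0; rewrite m0 /feasible.
  by split; [|split]; lra.
have us' : u < s by rewrite (lt_le_trans us) // lerBlDr lerDl.
have S_u0 : 0 < S - u by rewrite subr_gt0 (lt_le_trans us') // -hS lerDl.
have sep_u : sep (u + km) (s - u + ks).
  rewrite km0 addr0 /separate_market addrAC hS.
  by move: usep; rewrite mulrDr; lra.
have sep_0 : sep (m + km) (s + ks).
  by rewrite m0 km0 addr0 /separate_market mulr0 hS ltW // !mulr_gt0.
have := hbr.2 _ _ feas; apply/negP; rewrite -ltNge.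
rewrite (revenue_sep sep_u) (revenue_sep sep_0) m0 km0 addrAC hS !addr0.
have pbS : sep_small_price S <= sep_small_price (S - u).
  by rewrite sep_small_price_le // lerBlDr lerDl ltW.
have macro_gain : lamS * sep_small_price S * (u * R0) < sep_macro_price u * (u * R0).
  by rewrite ltr_pM2r ?mulr_gt0.
have small_loss : sep_small_price S * (lamS * (s - u) * R0)
                  <= sep_small_price (S - u) * (lamS * (s - u) * R0).
  by rewrite ler_wpM2r // !mulr_ge0 ?ltW // subr_gt0.
rewrite mul0r mulr0 add0r.
lra.
Unshelve. all: by end_near. Qed.

Lemma best_response_conditions :
  [/\ 0 < M, Nm * (lamS * S) < Nf * M -> m = 0,
      0 < m -> sep M S -> sep_marginal M S m s <= 0
    & Nf * M < Nm * (lamS * S) -> 0 <= sep_marginal M S m s].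
Proof.
have M0 := best_response_macro_total_gt0.
split=> //; first exact: best_response_common_no_macro.
- exact: best_response_sep_marginal_le0.
- exact: best_response_sep_marginal_ge0.
Qed.

End BestResponse.

Lemma no_slack_equilibrium B1 B2 B01 B02 B1M B1S B2M B2S :
  0 <= B01 -> 0 <= B02 -> BS_NE Nm Nf lamS alpha B1 < B01 ->
  constrained_NE Nm Nf R0 lamS alpha B1 B2 B01 B02 B1M B1S B2M B2S ->
  B01 < B1S -> B02 < B2S -> False.
Proof.
move=> hB01 hB02 hviol [f1 f2 br1 br2] slack1 slack2.
have [hm1 [_ budget1]] := f1; have [hm2 _] := f2.
have s1_gt0 : 0 < B1S := le_lt_trans hB01 slack1.
have s2_gt0 : 0 < B2S := le_lt_trans hB02 slack2.
have [M_gt0 common1 le1 ge1] := best_response_conditions (conj f1 br1) slack1 hB01 hm2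
  (ltW s2_gt0) erefl erefl.
have [_ common2 le2 ge2] := best_response_conditions (conj f2 br2) slack2 hB02 hm1
  (ltW s1_gt0) (addrC _ _) (addrC _ _).
have hsep : sep (B1M + B2M) (B1S + B2S).
  rewrite /separate_market leNgt; apply/negP => hcom.
  by move: M_gt0; rewrite (common1 hcom) (common2 hcom) addr0 ltxx.
have S_gt0 : 0 < B1S + B2S by rewrite addr_gt0.
have [balance share] :=
  sep_first_order_balance hm1 hm2 M_gt0 s1_gt0 s2_gt0 hsep
    (le1^~ hsep) (le2^~ hsep) ge1 ge2.
have ratio := sep_price_balance_ratio M_gt0 S_gt0 balance.
have := small_share_le_BS_NE S_gt0 ratio share budget1.
lra.
Qed.

End Market.

Theorem proposition1 (R : realType) (Nm Nf R0 lamS alpha B1 B2 B01 B02 : R)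
  (hNm : 0 < Nm) (hNf : 0 < Nf) (hR0 : 0 < R0) (hlam : 1 < lamS)
  (ha0 : 0 < alpha) (ha1 : alpha < 1) (hB1 : 0 < B1) (hB2 : 0 < B2)
  (hviol1 : BS_NE Nm Nf lamS alpha B1 < B01)
  (hviol2 : BS_NE Nm Nf lamS alpha B2 < B02)
  (B1M B1S B2M B2S : R) :
  constrained_NE Nm Nf R0 lamS alpha B1 B2 B01 B02 B1M B1S B2M B2S ->
  (* Type I *)
  (B1S = B01 /\ B2S = B02) \/
  (* Type II *)
  ((B1S = B01 /\ B02 < B2S) \/ (B01 < B1S /\ B2S = B02)).
Proof.
move=> hNE.
have B0_ge0 B Bi : 0 < Bi -> BS_NE Nm Nf lamS alpha Bi < B -> 0 <= B.
  by move=> Bi0 /(lt_trans (BS_NE_gt0 alpha hNm hNf hlam Bi0)) /ltW.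
have [[_ [hs1 _]] [_ [hs2 _]] _ _] := hNE.
move: hs1 hs2; rewrite !le_eqVlt => /predU1P[<-|slack1] /predU1P[<-|slack2].
- by left.
- by right; left.
- by right; right.
exfalso; apply: (no_slack_equilibrium hNm hNf hR0 hlam ha0 ha1
  (B0_ge0 _ _ hB1 hviol1) (B0_ge0 _ _ hB2 hviol2) hviol1 hNE slack1 slack2).
Qed.
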